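(* For all $\alpha,\beta\in[0,1]$, the star product $M_{\beta,\alpha}\ast M_{\alpha,\beta}$ of Marshall–Olkin copulas is a lower semilinear copula.
   Context: A (bivariate) copula is a distribution function on $[0,1]^2$ with uniform marginals. For $\alpha,\beta\in[0,1]$ the Marshall–Olkin copula is $M_{\alpha,\beta}(u,v)=\min\{u^{1-\alpha}v,\,uv^{1-\beta}\}$. The star product of copulas is $(A\ast B)(x,y)=\int_{[0,1]}\partial_2A(x,s)\,\partial_1B(s,y)\,ds$. A copula $C$ is lower semilinear if for every $x\in(0,1]$ the mappings $t\mapsto C(t,x)$ and $t\mapsto C(x,t)$ are linear on $[0,x]$. *)

From HB Require Import structures.
From mathcomp Require Import all_boot all_order all_algebra.
From mathcomp Require Import all_classical all_reals all_analysis.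
Set Implicit Arguments. Unset Strict Implicit. Unset Printing Implicit Defensive.
Import Order.TTheory GRing.Theory Num.Theory.
Import numFieldNormedType.Exports.
Local Open Scope classical_set_scope.
Local Open Scope ring_scope.

Section Copulas.
Variable R : realType.

Definition in01 (x : R) : Prop := 0 <= x <= 1.

(* A bivariate copula, given as a function R -> R -> R of which only the
   restriction to [0,1]^2 matters: grounded, uniform margins, 2-increasing
   (equivalently: a distribution function on [0,1]^2 with uniform marginals). *)
Definition is_copula (C : R -> R -> R) : Prop :=
  [/\ (forall u, in01 u -> C u 0 = 0 /\ C 0 u = 0),
      (forall u, in01 u -> C u 1 = u /\ C 1 u = u) &
      (forall u1 u2 v1 v2, in01 u1 -> in01 u2 -> in01 v1 -> in01 v2 ->
         u1 <= u2 -> v1 <= v2 ->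
         0 <= C u2 v2 - C u2 v1 - C u1 v2 + C u1 v1)].

Definition MO (a b : R) : R -> R -> R :=
  fun u v => Num.min (powR u (1 - a) * v) (u * powR v (1 - b)).

(* partial derivatives (total functions: derive1 gives the limit of the
   difference quotients, which is the derivative wherever it exists) *)
Definition d1 (C : R -> R -> R) (x y : R) : R := derive1 (fun t => C t y) x.
Definition d2 (C : R -> R -> R) (x y : R) : R := derive1 (fun t => C x t) y.

Definition star (A B : R -> R -> R) : R -> R -> R :=
  fun x y => Rintegral (@lebesgue_measure R) `[0, 1]%classic
               (fun s => d2 A x s * d1 B s y).

Definition lower_semilinear (C : R -> R -> R) : Prop :=
  forall x, 0 < x <= 1 ->
    (exists m c : R, forall t, 0 <= t <= x -> C t x = m * t + c) /\
    (exists m c : R, forall t, 0 <= t <= x -> C x t = m * t + c).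

End Copulas.

From HB Require Import structures.
From mathcomp Require Import all_boot all_order all_algebra.
From mathcomp Require Import all_classical all_reals all_analysis.
From mathcomp Require Import ring lra measurable_realfun.
Set Implicit Arguments. Unset Strict Implicit. Unset Printing Implicit Defensive.
Import Order.TTheory GRing.Theory Num.Theory.
Import numFieldNormedType.Exports.
Local Open Scope classical_set_scope.
Local Open Scope ring_scope.

(* Since M_{a,b}(s,y) = M_{b,a}(y,s), the factor d1 M_{a,b}(s,y) of the star
   product equals psi(y,s) := d2 M_{b,a}(y,s), so M_{b,a} * M_{a,b} is the Gram
   form C(x,y) = int_0^1 psi(x,s) psi(y,s) ds.  The kernel psi(x,.) equals
   x^(1-b) up to the kink k(x) = x^(b/a) and x (1-a) s^(-a) after it; it
   vanishes at x = 0, equals 1 at x = 1, is nondecreasing in x and integrates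
   to x, and any such kernel makes its Gram form a copula: the 2-increment is
   the integral of (psi(u2,.) - psi(u1,.)) (psi(v2,.) - psi(v1,.)) >= 0.
   For t <= x, psi(x,.) is constant on (0, k(x)], where
   int_0^k(x) psi(t,s) ds = t k(x)^(1-a) because k(t) <= k(x), while beyond
   k(x) one has psi(t,s) = (t/x) psi(x,s); hence C(t,x) is linear in t on
   [0, x], and so is C(x,t) by symmetry. *)

Lemma in01_0 (R : realType) : in01 (0 : R).
Proof. by rewrite /in01 lexx ler01. Qed.

Lemma in01_1 (R : realType) : in01 (1 : R).
Proof. by rewrite /in01 lexx ler01. Qed.

Lemma powR_le1 (R : realType) (x p : R) : in01 x -> 0 <= p -> powR x p <= 1.
Proof.
case/andP=> x0 x1 p0; have [->|xn0] := eqVneq x 0.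
  by rewrite /powR eqxx; case: (p == 0).
rewrite -[leRHS](powRr0 x) ger_powR //.
by rewrite x1 andbT lt_neqAle eq_sym xn0 x0.
Qed.

Lemma MO_swap (R : realType) (a b u v : R) : MO a b u v = MO b a v u.
Proof. by rewrite /MO (mulrC v) (mulrC (powR v (1 - b))) minC. Qed.

Lemma d1_MO (R : realType) (a b s y : R) : d1 (MO a b) s y = d2 (MO b a) y s.
Proof.
rewrite /d1 /d2 (_ : (fun t => MO a b t y) = (fun t => MO b a y t)) //.
by apply/funext => t; exact: MO_swap.
Qed.

Section LebesgueIntegrals.
Variable R : realType.
Local Notation mu := (@lebesgue_measure R).

Lemma measurable_fun_eq_except (S : seq R) (D : set R) (f g : R -> R) :
  measurable D -> measurable_fun D g ->
  (forall s, D s -> s \notin S -> f s = g s) -> measurable_fun D f.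
Proof.
elim: S D => [|p S IH] D mD mg fg.
  by apply: eq_measurable_fun mg => s /[!inE] Ds; rewrite fg.
rewrite -(setUIDK D [set p]); apply/measurable_funU => //.
- exact: measurableI.
- exact: measurableD.
split; first by apply: (measurable_funS (E := [set p])) => //; exact: measurable_fun_set1.
apply: IH => [||s [Ds sp] sS]; first exact: measurableD.
- exact: measurable_funS mg.
by apply: fg => //; rewrite in_cons negb_or sS andbT; apply/eqP.
Qed.

Lemma Rintegral_eq_except (S : seq R) (D : set R) (f g : R -> R) :
  measurable D -> measurable_fun D g ->
  (forall s, D s -> s \notin S -> f s = g s) ->
  \int[mu]_(x in D) f x = \int[mu]_(x in D) g x.
Proof.
move=> mD mg fg; rewrite /Rintegral; congr fine; apply: ae_eq_integral => //.
- by apply/measurable_EFinP; exact: measurable_fun_eq_except fg.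
- exact/measurable_EFinP.
exists [set` S]; split.
- apply: countable_measurable => [r|]; first exact: measurable_set1.
  exact/finite_set_countable/finite_seq.
- exact/countable_lebesgue_measure0/finite_set_countable/finite_seq.
move=> s /= /not_implyP[Ds fgs]; apply: contrapT => sS; apply: fgs.
by rewrite fg //; apply/negP.
Qed.

Lemma integrable_bounded_oc01 (D : set R) (f : R -> R) (M : R) :
  measurable D -> D `<=` `]0, 1] -> measurable_fun setT f ->
  (forall s, D s -> `|f s| <= M) -> mu.-integrable D (EFin \o f).
Proof.
move=> mD D01 mf fM; apply: measurable_bounded_integrable => //.
- apply: (@le_lt_trans _ _ (mu `]0, 1])); first by apply: le_measure; rewrite ?inE.
  by rewrite lebesgue_measure_itv /= lte_fin ltr01 oppr0 adde0 ltry.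
- exact: measurable_funS mf.
exists M; split; rewrite ?num_real // => M' MM' s Ds /=.
by rewrite (le_trans (fM s Ds)) // ltW.
Qed.

Lemma Rintegral_cst_itv_oc (r c d : R) : c <= d ->
  \int[mu]_(_ in `]c, d]) r = r * (d - c).
Proof.
move=> cd; rewrite Rintegral_cst //; congr (_ * _).
have hm : mu (`]c, d] : set R) = (d - c)%:E.
  rewrite lebesgue_measure_itv /= lte_fin.
  have [//|dc] := ltP c d.
  suff -> : d = c by rewrite subrr.
  by apply/eqP; rewrite eq_le cd dc.
exact: (congr1 fine hm).
Qed.

Lemma Rintegral_powR_derive (m p c d : R) : 0 < c -> c <= d ->
  \int[mu]_(s in `]c, d]) (m * p * powR s (p - 1)) = m * (powR d p - powR c p).
Proof.
move=> c0; rewrite le_eqVlt => /predU1P[<-|cd].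
  by rewrite set_itv_ge ?bnd_simp ?ltxx // Rintegral_set0 subrr mulr0.
pose F s := m * powR s p; pose f s := m * p * powR s (p - 1).
have F'f (s : R) : 0 < s -> derivable F s 1 /\ F^`()%classic s = f s.
  move=> s0; have dp := @derivable_powR R 1 p s; rewrite in_itv /= s0 in dp.
  split; first exact: derivableM (derivable_cst m s 1) (dp isT).
  rewrite /F (derive1Ml (f := fun u => powR u p)); last exact: dp.
  by rewrite powR_derive1 ?in_itv /= ?s0 // mulrA.
have Fcont (s : R) : 0 < s -> {for s, continuous F}.
  by move=> /F'f[+ _] => /derivable1_diffP/differentiable_continuous.
have fcont : {within `[c, d], continuous f}.
  apply: continuous_in_subspaceT => s; rewrite inE /= in_itv /= => /andP[cs _].
  apply: differentiable_continuous; apply: differentiableM => //.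
  by apply/derivable1_diffP/derivable_powR; rewrite in_itv /= (lt_le_trans c0).
rewrite Rintegral_itv_obnd_cbnd; last first.
  have If : mu.-integrable `[c, d] (EFin \o f).
    by apply: continuous_compact_integrable => //; exact: segment_compact.
  apply: integrableS If => //.
  by apply: subset_itvr; rewrite bnd_simp.
have dF : derivable_oo_LRcontinuous F c d.
  split; last exact/cvg_at_left_filter/Fcont/(lt_trans c0).
  - by move=> s; rewrite in_itv /= => /andP[cs _]; exact: (F'f s (lt_trans c0 cs)).1.
  - exact/cvg_at_right_filter/Fcont.
have dFf : {in `]c, d[, F^`()%classic =1 f}.
  by move=> s; rewrite in_itv /= => /andP[cs _]; exact: (F'f s (lt_trans c0 cs)).2.
by rewrite /Rintegral (continuous_FTC2 cd fcont dF dFf) /= /F mulrBr.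
Qed.

End LebesgueIntegrals.

Section KernelCopula.
Variable R : realType.
Local Notation mu := (@lebesgue_measure R).
Variable psi : R -> R -> R.

(* Integrating over ]0, 1] lets the kernel conditions below ignore s = 0, where
   the Marshall-Olkin kernel can be 0 ^ 0 = 1 at x = 0. *)
Definition gram (x y : R) : R := \int[mu]_(s in `]0, 1]) (psi x s * psi y s).

Lemma gram_sym x y : gram x y = gram y x.
Proof. by apply: eq_Rintegral => s _; rewrite mulrC. Qed.

Hypothesis measurable_psi : forall x, measurable_fun setT (psi x).
Hypothesis psi0 : forall s : R, 0 < s <= 1 -> psi 0 s = 0.
Hypothesis psi1 : forall s : R, 0 < s <= 1 -> psi 1 s = 1.
Hypothesis psi_homo : forall s x y : R, 0 < s <= 1 -> 0 <= x -> x <= y -> y <= 1 ->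
  psi x s <= psi y s.
Hypothesis Rintegral_psi : forall x, in01 x -> \int[mu]_(s in `]0, 1]) psi x s = x.

Lemma psi_in01 (x s : R) : in01 x -> 0 < s <= 1 -> in01 (psi x s).
Proof.
move=> /andP[x0 x1] s01; rewrite /in01 -(psi0 s01) -(psi1 s01).
by rewrite !psi_homo.
Qed.

Lemma gram_0 x : gram x 0 = 0.
Proof.
rewrite /gram (@eq_Rintegral _ _ _ mu _ (fun=> 0)) ?Rintegral_cst_itv_oc ?mul0r //.
by move=> s; rewrite inE /= in_itv /= => s01; rewrite psi0 // mulr0.
Qed.

Lemma gram_1 x : in01 x -> gram x 1 = x.
Proof.
move=> x01; rewrite -[RHS]Rintegral_psi //; apply: eq_Rintegral => s.
by rewrite inE /= in_itv /= => s01; rewrite psi1 // mulr1.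
Qed.

Lemma gram_rect (u1 u2 v1 v2 : R) : in01 u1 -> in01 u2 -> in01 v1 -> in01 v2 ->
  u1 <= u2 -> v1 <= v2 -> 0 <= gram u2 v2 - gram u2 v1 - gram u1 v2 + gram u1 v1.
Proof.
move=> hu1 hu2 hv1 hv2 u12 v12.
have mP (x y : R) : measurable_fun setT (fun s => psi x s * psi y s).
  exact: measurable_funM.
have bounds (s : R) : 0 < s <= 1 -> [/\ in01 (psi u1 s), in01 (psi u2 s),
    in01 (psi v1 s) & in01 (psi v2 s)].
  by move=> s01; split; apply: psi_in01.
have bounded_int (f : R -> R) : measurable_fun setT f ->
    (forall s : R, 0 < s <= 1 -> -1 <= f s <= 1) -> mu.-integrable `]0, 1] (EFin \o f).
  move=> mf fb; apply: (integrable_bounded_oc01 (M := 1)) => // s.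
  by rewrite /= in_itv /= ler_norml => /fb.
rewrite (_ : _ - _ - _ + _ = (gram u2 v2 - gram u2 v1) - (gram u1 v2 - gram u1 v1));
  last by ring.
rewrite /gram -!RintegralB //.
all: try by apply: bounded_int => [|s /bounds[]]; [do ?apply: measurable_funB; exact: mP |
  rewrite /in01 => /andP[? ?] /andP[? ?] /andP[? ?] /andP[? ?]; apply/andP; split; nra].
apply: Rintegral_ge0 => s; rewrite /= in_itv /= => s01.
rewrite (_ : _ - _ - _ = (psi u2 s - psi u1 s) * (psi v2 s - psi v1 s)); last by ring.
have [/andP[u10 _] /andP[_ u21]] := (hu1, hu2).
have [/andP[v10 _] /andP[_ v21]] := (hv1, hv2).
by rewrite mulr_ge0 // subr_ge0 psi_homo.
Qed.

Lemma is_copula_gram : is_copula gram.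
Proof.
split=> [u u01|u u01|]; last exact: gram_rect.
- by rewrite gram_0 gram_sym gram_0.
- by rewrite gram_1 // gram_sym gram_1.
Qed.

End KernelCopula.

Section MarshallOlkin.
Variable R : realType.
Local Notation mu := (@lebesgue_measure R).
Variables a b : R.
Hypotheses (ha : 0 <= a <= 1) (hb : 0 <= b <= 1).

Let a0 : 0 <= a. Proof. by case/andP: ha. Qed.
Let a1 : a <= 1. Proof. by case/andP: ha. Qed.
Let b0 : 0 <= b. Proof. by case/andP: hb. Qed.
Let b1 : b <= 1. Proof. by case/andP: hb. Qed.

(* [mo_kink x] is where the two branches of the minimum in [MO b a x] cross.
   For [a = 0] the second branch is active for all [s > 0]; the formula would
   give [x ^ (b / 0) = x ^ 0 = 1] instead. *)
Definition mo_kink (x : R) : R := if a == 0 then 0 else powR x (b / a).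
Definition mo_slope (x : R) : R := powR x (1 - b).
Definition mo_d2 (x s : R) : R :=
  if s <= mo_kink x then mo_slope x else x * (1 - a) * powR s (- a).

Lemma mo_kink_ge0 x : 0 <= mo_kink x.
Proof. by rewrite /mo_kink; case: ifP => // _; exact: powR_ge0. Qed.

Lemma mo_kink_homo x y : 0 <= x -> x <= y -> mo_kink x <= mo_kink y.
Proof.
move=> x0 xy; rewrite /mo_kink; case: ifP => // _.
by apply: ge0_ler_powR; rewrite ?nnegrE ?divr_ge0 // (le_trans x0).
Qed.

Lemma mo_kink_le1 x : in01 x -> mo_kink x <= 1.
Proof.
by move=> x01; rewrite /mo_kink; case: ifP => // _; rewrite powR_le1 ?divr_ge0.
Qed.

Lemma mo_slope_homo x y : 0 <= x -> x <= y -> mo_slope x <= mo_slope y.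
Proof.
by move=> x0 xy; apply: ge0_ler_powR; rewrite ?nnegrE ?subr_ge0 // (le_trans x0).
Qed.


Lemma mo_branch_cmp x s : 0 < x -> 0 < s -> a != 0 ->
  ((mo_slope x * s <= x * powR s (1 - a)) = (s <= mo_kink x)) *
  ((x * powR s (1 - a) <= mo_slope x * s) = (mo_kink x <= s)).
Proof.
move=> x0 s0 an0; have ap : 0 < a by rewrite lt_neqAle eq_sym an0 a0.
set L := mo_slope x * s; set T := x * powR s (1 - a); set k := mo_kink x.
have [L0 T0 k0] : [/\ 0 < L, 0 < T & 0 < k].
  by rewrite /L /T /k /mo_kink (negbTE an0) !mulr_gt0 ?powR_gt0.
rewrite -(ler_ln L0 T0) -(ler_ln s0 k0) -(ler_ln T0 L0) -(ler_ln k0 s0).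
rewrite /L /T /k /mo_slope /mo_kink (negbTE an0) !lnM ?posrE ?powR_gt0 // !ln_powR.
have bE : b = a * (b / a) by rewrite mulrC divfK.
move: (b / a) bE => c ->; set X := ln x; set S := ln s.
have e1 : ((1 - a * c) * X + S <= X + (1 - a) * S) = (0 <= a * (c * X - S)).
  by rewrite -subr_ge0; congr (0 <= _); ring.
have e2 : (X + (1 - a) * S <= (1 - a * c) * X + S) = (0 <= a * (S - c * X)).
  by rewrite -subr_ge0; congr (0 <= _); ring.
by rewrite e1 e2 !pmulr_rge0 // !subr_ge0.
Qed.

Lemma mo_head_le_tail x s : in01 x -> 0 < s -> s <= mo_kink x ->
  mo_slope x * s <= x * powR s (1 - a).
Proof.
move=> /andP[x0 x1] s0 sk; have [a_eq0|an0] := eqVneq a 0.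
  by move: sk; rewrite /mo_kink a_eq0 eqxx leNgt s0.
have [x_eq0|xn0] := eqVneq x 0; last first.
  by rewrite mo_branch_cmp // lt_neqAle eq_sym xn0.
have kE : mo_kink x = powR 0 (b / a) by rewrite /mo_kink (negbTE an0) x_eq0.
have /gt_eqF : 0 < powR 0 (b / a) by rewrite -kE (lt_le_trans s0).
move/negbT; rewrite powR_eq0 eqxx negbK mulf_eq0 invr_eq0 (negbTE an0) orbF => /eqP b_eq0.
by rewrite x_eq0 /mo_slope b_eq0 subr0 powRr1 // !mul0r.
Qed.

Lemma mo_tail_le_head x s : in01 x -> 0 < s -> mo_kink x <= s ->
  x * powR s (1 - a) <= mo_slope x * s.
Proof.
move=> /andP[x0 x1] s0 ks; have [->|xn0] := eqVneq x 0.
  by rewrite mul0r mulr_ge0 ?powR_ge0 ?(ltW s0).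
have xp : 0 < x by rewrite lt_neqAle eq_sym xn0.
have [a_eq0|an0] := eqVneq a 0; last by rewrite mo_branch_cmp.
rewrite a_eq0 subr0 powRr1 ?(ltW s0) // ler_pM2r // ger1_powR ?xp //.
by rewrite lerBlDr lerDl.
Qed.

Lemma mo_kinkE x : in01 x -> 0 < mo_kink x ->
  mo_slope x * mo_kink x = x * powR (mo_kink x) (1 - a).
Proof.
move=> x01 k0; apply/le_anti.
by rewrite mo_head_le_tail ?mo_tail_le_head.
Qed.

Lemma d2_MO x s : in01 x -> 0 < s -> s != mo_kink x -> d2 (MO b a) x s = mo_d2 x s.
Proof.
move=> x01 s0 sk; rewrite /d2 /mo_d2.
have s_near_pos : \forall t \near s, 0 < t by exact: lt_nbhsr.
have [sk'|ks] := leP s (mo_kink x).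
  have {sk sk'} sk : s < mo_kink x by rewrite lt_neqAle sk sk'.
  have E : \forall t \near s, MO b a x t = mo_slope x * t.
    near=> t; rewrite /MO min_l // mo_head_le_tail //; first by near: t.
    by apply: ltW; near: t; exact: lt_nbhsl.
  rewrite derive1E (near_eq_derive _ E) -derive1E.
  by rewrite (derive1Ml (f := id)) // derive1_id mulr1.
have E : \forall t \near s, MO b a x t = x * powR t (1 - a).
  near=> t; rewrite /MO min_r // mo_tail_le_head //; first by near: t.
  by apply: ltW; near: t; exact: lt_nbhsr.
rewrite derive1E (near_eq_derive _ E) -derive1E.
rewrite (derive1Ml (f := fun t => powR t (1 - a))).
  by rewrite powR_derive1 ?in_itv /= ?s0 // mulrA (_ : 1 - a - 1 = - a) //; ring.
by apply: derivable_powR; rewrite in_itv /= s0.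
Unshelve. all: by end_near. Qed.

Lemma measurable_mo_d2 x : measurable_fun setT (mo_d2 x).
Proof.
apply: measurable_fun_ifT => //; first exact: measurable_fun_ler.
by apply: measurable_funM => //; exact: measurable_powR.
Qed.

Lemma mo_d2_0 s : 0 < s -> mo_d2 0 s = 0.
Proof.
move=> s0; rewrite /mo_d2; case: ifPn => [sk|_]; last by rewrite !mul0r.
have := mo_head_le_tail (in01_0 R) s0 sk; rewrite mul0r pmulr_lle0 // => h.
by apply/le_anti; rewrite h; exact: powR_ge0.
Qed.

Lemma mo_d2_1 s : 0 < s <= 1 -> mo_d2 1 s = 1.
Proof.
case/andP=> s0 s1; rewrite /mo_d2 /mo_kink /mo_slope powR1.
have [->|an0] := eqVneq a 0; last by rewrite s1.
by rewrite leNgt s0 /= subr0 oppr0 powRr0 !mul1r.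
Qed.

Lemma mo_d2_tail_le_slope x s : in01 x -> 0 < s -> mo_kink x <= s ->
  x * (1 - a) * powR s (- a) <= mo_slope x.
Proof.
move=> x01 s0 ks; have /andP[x0 _] := x01.
have := mo_tail_le_head x01 s0 ks.
rewrite powRD ?(gt_eqF s0) ?implybT // powRr1 ?(ltW s0) //.
rewrite mulrCA mulrC ler_pM2r // => h; apply: le_trans h.
by rewrite ler_wpM2r ?powR_ge0 // ler_piMr // lerBlDr lerDl.
Qed.

Lemma mo_d2_homo (s x y : R) : 0 < s <= 1 -> 0 <= x -> x <= y -> y <= 1 ->
  mo_d2 x s <= mo_d2 y s.
Proof.
move=> /andP[s0 _] x0 xy y1; have x01 : in01 x by rewrite /in01 x0 (le_trans xy y1).
have kxy := mo_kink_homo x0 xy; rewrite /mo_d2.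
have [sx|xs] := leP s (mo_kink x); first by rewrite (le_trans sx kxy) mo_slope_homo.
have [sy|ys] := leP s (mo_kink y).
  by rewrite (le_trans (mo_d2_tail_le_slope x01 s0 (ltW xs))) ?mo_slope_homo.
by rewrite ler_wpM2r ?ler_wpM2r ?powR_ge0 ?subr_ge0.
Qed.

Lemma mo_d2_in01 x s : in01 x -> 0 < s <= 1 -> in01 (mo_d2 x s).
Proof.
by apply: (psi_in01 _ mo_d2_1 mo_d2_homo) => t /andP[t0 _]; exact: mo_d2_0.
Qed.

Lemma integrable_mo_d2 x (D : set R) : in01 x -> measurable D -> D `<=` `]0, 1] ->
  mu.-integrable D (EFin \o mo_d2 x).
Proof.
move=> x01 mD D01; apply: (integrable_bounded_oc01 (M := 1)) => //.
  exact: measurable_mo_d2.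
move=> s /D01; rewrite /= in_itv /= => /(mo_d2_in01 x01) /andP[? ?].
by rewrite ger0_norm.
Qed.

Lemma integrable_mo_d2M x y (D : set R) : in01 x -> in01 y -> measurable D ->
  D `<=` `]0, 1] -> mu.-integrable D (EFin \o (fun s => mo_d2 x s * mo_d2 y s)).
Proof.
move=> x01 y01 mD D01; apply: (integrable_bounded_oc01 (M := 1)) => //.
  by apply: measurable_funM; exact: measurable_mo_d2.
move=> s /D01; rewrite /= in_itv /= => s01.
have /andP[? ?] := mo_d2_in01 x01 s01; have /andP[? ?] := mo_d2_in01 y01 s01.
by rewrite ger0_norm ?mulr_ge0 ?mulr_ile1.
Qed.

Lemma star_MO_gram x y : in01 x -> in01 y ->
  star (MO b a) (MO a b) x y = gram mo_d2 x y.
Proof.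
move=> x01 y01; have mP : measurable_fun setT (fun s => mo_d2 x s * mo_d2 y s).
  by apply: measurable_funM; exact: measurable_mo_d2.
rewrite /star /gram (Rintegral_eq_except (S := [:: 0; mo_kink x; mo_kink y])
  (g := fun s => mo_d2 x s * mo_d2 y s)) //.
- by rewrite Rintegral_itv_obnd_cbnd // integrable_mo_d2M.
- exact: measurable_funS measurableT (@subsetT _ _) mP.
move=> s /=; rewrite in_itv /= => /andP[s0 _].
rewrite !in_cons in_nil !negb_or => /and4P[sn0 snx sny _].
have sp : 0 < s by rewrite lt_neqAle eq_sym sn0 s0.
by rewrite d1_MO !d2_MO.
Qed.

Lemma Rintegral_mo_d2 t K : in01 t -> mo_kink t <= K -> K <= 1 ->
  \int[mu]_(s in `]0, K]) mo_d2 t s = t * powR K (1 - a).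
Proof.
move=> t01 tK K1; have K0 : 0 <= K := le_trans (mo_kink_ge0 t) tK.
have /andP[t0 t1] := t01.
have [->|tn0] := eqVneq t 0.
  rewrite (@eq_Rintegral _ _ _ mu _ (fun=> 0)) ?Rintegral_cst_itv_oc ?mul0r //.
  by move=> s; rewrite inE /= in_itv /= => /andP[s0 _]; rewrite mo_d2_0.
have [a_eq0|an0] := eqVneq a 0.
  rewrite (@eq_Rintegral _ _ _ mu _ (fun=> t)).
    by rewrite Rintegral_cst_itv_oc // subr0 a_eq0 subr0 powRr1.
  move=> s; rewrite inE /= in_itv /= => /andP[s0 _].
  by rewrite /mo_d2 /mo_kink a_eq0 eqxx leNgt s0 /= subr0 oppr0 powRr0 !mulr1.
set k := mo_kink t.
have k0 : 0 < k by rewrite /k /mo_kink (negbTE an0) powR_gt0 // lt_neqAle eq_sym tn0.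
have IK : mu.-integrable `]0, K] (EFin \o mo_d2 t).
  apply: integrable_mo_d2 => // s /=; rewrite !in_itv /= => /andP[-> sK].
  exact: le_trans sK K1.
have := Rintegral_itvB IK (x := k); rewrite !bnd_simp (ltW k0) tK.
move=> /(_ isT isT) /eqP; rewrite subr_eq => /eqP ->.
have -> : \int[mu]_(s in `]0, k]) mo_d2 t s = mo_slope t * k.
  rewrite -[k in RHS]subr0 -Rintegral_cst_itv_oc ?(ltW k0) //.
  by apply: eq_Rintegral => s; rewrite inE /= in_itv /= /mo_d2 => /andP[_ ->].
have -> : \int[mu]_(s in `]k, K]) mo_d2 t s = t * (powR K (1 - a) - powR k (1 - a)).
  rewrite -Rintegral_powR_derive // -[1 - a - 1]/(1 - a + -1) addrAC subrr add0r.
  apply: eq_Rintegral => s; rewrite inE /= in_itv /= /mo_d2 => /andP[ks _].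
  by rewrite leNgt ks.
by rewrite mo_kinkE //; ring.
Qed.

Lemma mo_d2_scale t x s : 0 <= t -> t <= x -> 0 < x -> mo_kink x < s ->
  mo_d2 t s = t / x * mo_d2 x s.
Proof.
move=> t0 tx x0 ks; have kts := le_lt_trans (mo_kink_homo t0 tx) ks.
by rewrite /mo_d2 !leNgt ks kts /=; field; rewrite gt_eqF.
Qed.

Lemma gram_mo_d2_linear x : 0 < x <= 1 ->
  exists m, forall t, 0 <= t <= x -> gram mo_d2 t x = m * t.
Proof.
case/andP=> x0 x1; have x01 : in01 x by rewrite /in01 ltW.
set k := mo_kink x; have k0 : 0 <= k := mo_kink_ge0 x.
have k1 : k <= 1 := mo_kink_le1 x01.
exists (mo_slope x * powR k (1 - a) + (\int[mu]_(s in `]k, 1]) (mo_d2 x s * mo_d2 x s)) / x).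
move=> t /andP[t0 tx]; have t01 : in01 t by rewrite /in01 t0 (le_trans tx x1).
have I01 := integrable_mo_d2M t01 x01 (measurable_itv `]0, 1]) (@subset_refl _ _).
have := Rintegral_itvB I01 (x := k); rewrite !bnd_simp k0 k1.
move=> /(_ isT isT) /eqP; rewrite subr_eq => /eqP; rewrite /gram => ->.
have -> : \int[mu]_(s in `]0, k]) (mo_d2 t s * mo_d2 x s) =
    \int[mu]_(s in `]0, k]) (mo_d2 t s * mo_slope x).
  by apply: eq_Rintegral => s; rewrite inE /= in_itv /= /mo_d2 /k => /andP[_ ->].
rewrite RintegralZr ?integrable_mo_d2 //; last first.
  by move=> s /=; rewrite !in_itv /= => /andP[-> /le_trans]; apply.
rewrite Rintegral_mo_d2 ?mo_kink_homo //.
have -> : \int[mu]_(s in `]k, 1]) (mo_d2 t s * mo_d2 x s) =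
    \int[mu]_(s in `]k, 1]) (t / x * (mo_d2 x s * mo_d2 x s)).
  apply: eq_Rintegral => s; rewrite inE /= in_itv /= => /andP[ks _].
  by rewrite (mo_d2_scale t0 tx x0 ks) mulrA.
rewrite RintegralZl ?integrable_mo_d2M //; last first.
  by move=> s /=; rewrite !in_itv /= => /andP[/(le_lt_trans k0) -> ->].
by field; rewrite gt_eqF.
Qed.

Lemma is_copula_gram_mo_d2 : is_copula (gram mo_d2).
Proof.
apply: is_copula_gram mo_d2_1 mo_d2_homo _ => [|s /andP[s0 _]|x x01].
- exact: measurable_mo_d2.
- exact: mo_d2_0.
by rewrite Rintegral_mo_d2 ?mo_kink_le1 // powR1 mulr1.
Qed.

Lemma lower_semilinear_gram_mo_d2 : lower_semilinear (gram mo_d2).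
Proof.
move=> x x01; have [m lin] := gram_mo_d2_linear x01.
split; exists m, 0 => t tx; rewrite addr0; last rewrite gram_sym; exact: lin.
Qed.

End MarshallOlkin.

Lemma eq_is_copula (R : realType) (C C' : R -> R -> R) :
  (forall x y, in01 x -> in01 y -> C x y = C' x y) -> is_copula C -> is_copula C'.
Proof.
move=> CC' [C0 C1 Crect]; have [z01 o01] := (in01_0 R, in01_1 R).
split=> [u u01|u u01|u1 u2 v1 v2 u01 u02 v01 v02 u12 v12].
- by rewrite -!CC' //; exact: C0.
- by rewrite -!CC' //; exact: C1.
by rewrite -!CC' //; exact: Crect.
Qed.

Lemma eq_lower_semilinear (R : realType) (C C' : R -> R -> R) :
  (forall x y, in01 x -> in01 y -> C x y = C' x y) ->
  lower_semilinear C -> lower_semilinear C'.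
Proof.
move=> CC' lsC x /[dup] x01 /andP[x0 x1].
have x01' : in01 x by rewrite /in01 ltW.
have t01 t : 0 <= t <= x -> in01 t by case/andP=> t0 tx; rewrite /in01 t0 (le_trans tx).
have [[m1 [c1 h1]] [m2 [c2 h2]]] := lsC x x01.
split; [exists m1, c1 | exists m2, c2] => t tx; have := t01 t tx.
- by move=> ?; rewrite -CC' // h1.
- by move=> ?; rewrite -CC' // h2.
Qed.

Theorem mainTheorem5 (R : realType) (a b : R) :
  0 <= a <= 1 -> 0 <= b <= 1 ->
  is_copula (star (MO b a) (MO a b)) /\
  lower_semilinear (star (MO b a) (MO a b)).
Proof.
move=> ha hb.
have E x y : in01 x -> in01 y -> gram (mo_d2 a b) x y = star (MO b a) (MO a b) x y.
  by move=> x01 y01; rewrite star_MO_gram.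
split.
- exact: eq_is_copula E (is_copula_gram_mo_d2 ha hb).
- exact: eq_lower_semilinear E (lower_semilinear_gram_mo_d2 ha hb).
Qed.
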